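(* Let $p$ be an odd prime and $G$ a finite non-abelian $p$-group with cyclic center. If $\Omega_1(Z(G))\not\le\gamma_3(G)G^p$, then $G$ has a non-inner automorphism of order $p$.
   Context: $\Omega_1(X)=\langle x\in X:x^p=1\rangle$, $\gamma_3(G)$ is the third term of the lower central series, $G^p=\langle g^p:g\in G\rangle$. *)

From mathcomp Require Import all_boot all_order all_fingroup all_solvable.
Set Implicit Arguments. Unset Strict Implicit. Unset Printing Implicit Defensive.
Local Open Scope group_scope.

Definition Omega1 (gT : finGroupType) (p : nat) (X : {set gT}) : {set gT} :=
  <<[set x in X | x ^+ p == 1]>>.

Definition powgrp (gT : finGroupType) (p : nat) (G : {set gT}) : {set gT} :=
  <<[set x ^+ p | x in G]>>.

Definition inner_aut (gT : finGroupType) (G : {set gT}) (a : {perm gT}) : Prop :=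
  exists2 g, g \in G & forall x, x \in G -> a x = x ^ g.

From mathcomp Require Import all_boot all_order all_fingroup all_solvable.
Set Implicit Arguments. Unset Strict Implicit. Unset Printing Implicit Defensive.
Local Open Scope group_scope.

(* Pick z of order p in Z(G) outside L_3(G) G^p, a maximal subgroup M of G
   containing z, and y in G \ M, so that G = <y> M.  For u in Z(M) with
   u^p = 1 and (y u)^p = y^p, the map y^i m |-> (y u)^i m is an automorphism
   of order p fixing M, which is inner only if u = [y, g] for some g in Z(M).
   If z is not such a commutator, take u = z.  Otherwise z = [y, w] with w in
   Z(M); then w^p is central, and as Z(G) is cyclic a nontrivial w^p would
   have z among its powers, making z a p-th power; so w^p = 1, and
   (y w)^p = y^p because p is odd.  Take u = w: if w = [y, g] with g in Z(M),
   then z = [y, [y, g]] lies in L_3(G). *)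

Lemma expMg_odd_prime (gT : finGroupType) (p : nat) (x y : gT) :
  prime p -> odd p -> commute x [~ x, y] -> commute y [~ x, y] ->
  [~ x, y] ^+ p = 1 -> (y * x) ^+ p = y ^+ p * x ^+ p.
Proof.
move=> pr_p odd_p cxr cyr rp1; rewrite expMg_Rmul //.
have p_gt2 : 0 < 2 < p.
  by rewrite /= ltn_neqAle prime_gt1 // andbT; apply: contraTneq odd_p => <-.
by rewrite -(divnK (prime_dvd_bin pr_p p_gt2)) mulnC expgM rp1 expg1n mulg1.
Qed.

Lemma cyclic_pgroup_prime_order_mem (gT : finGroupType) (p : nat)
    (Z : {group gT}) (z v : gT) :
  cyclic Z -> p.-group Z -> z \in Z -> #[z] = p -> v \in Z -> v != 1 ->
  z \in <[v]>.
Proof.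
move=> cZ pZ Zz oz Zv v1.
have pv : p.-group <[v]> by apply: pgroupS pZ; rewrite cycle_subG.
have := pgroup_pdiv pv; rewrite cycle_eq1 => /(_ v1) [pr_p p_dvd_v _].
have [x vx ox] := Cauchy pr_p p_dvd_v.
have Zx : x \in Z by apply: subsetP vx; rewrite cycle_subG.
rewrite -cycle_subG; have /eqP -> : <[z]> == <[x]> :> {set gT}.
  by rewrite (eq_subG_cyclic cZ) ?cycle_subG // -!orderE oz ox.
by rewrite cycle_subG.
Qed.

Section MaximalNormal.

Variables (gT : finGroupType) (G M : {group gT}).
Hypotheses (maxM : maximal M G) (nMG : G \subset 'N(M)).

Lemma mulg_cycle_maximal t : t \in G -> t \notin M -> <[t]> * M = G.
Proof.
move=> Gt Mt; have [sMG _] := andP (maxgroupp maxM).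
have sJG : <[t]> <*> M \subset G by rewrite join_subG cycle_subG Gt.
have := sJG; rewrite subEproper => /predU1P [<-|].
  by rewrite norm_joinEl // cycle_subG; apply: (subsetP nMG).
case/maxgroupP: maxM => _ /[apply] /(_ (joing_subr _ _)) eqM.
by case/negP: Mt; rewrite -eqM mem_gen // inE cycle_id.
Qed.

Lemma cent_maximal t g :
  t \in G -> t \notin M -> g \in 'C(M) -> commute g t -> g \in 'C(G).
Proof.
move=> Gt Mt cMg cgt; apply/centP => x; rewrite -(mulg_cycle_maximal Gt Mt).
case/mulsgP => _ m /cycleP [k ->] Mm ->.
by apply: commuteM; [apply: commuteX | exact: (centP cMg)].
Qed.

End MaximalNormal.

Section Twist.

Variables (gT : finGroupType) (G M : {group gT}) (p : nat) (y u : gT).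
Hypotheses (pr_p : prime p) (maxM : maximal M G) (nMG : G \subset 'N(M)).
Hypotheses (iGM : #|G : M| = p) (Gy : y \in G) (My : y \notin M).
Hypotheses (ZMu : u \in 'Z(M)) (yu_p : (y * u) ^+ p = y ^+ p).

Let sMG : M \subset G. Proof. by case/andP: (maxgroupp maxM). Qed.
Let nMy : y \in 'N(M). Proof. exact: (subsetP nMG). Qed.
Let Mu : u \in M. Proof. by case/setIP: ZMu. Qed.
Let cMu : u \in 'C(M). Proof. by case/setIP: ZMu. Qed.
Let Gu : u \in G. Proof. exact: (subsetP sMG). Qed.

Lemma expg_maximal_dvdn n : y ^+ n \in M -> p %| n.
Proof.
have oyM : #[coset M y] = p.
  have yM1 : #[coset M y] != 1%N.
    by rewrite order_eq1; apply: contra My => /eqP; apply: coset_idr.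
  apply/(prime_nt_dvdP pr_p yM1).
  by rewrite -iGM -card_quotient // order_dvdG // mem_quotient.
by move=> yMn; rewrite -oyM order_dvdn -morphX //; apply/eqP/coset_id.
Qed.

Lemma twist_cocycle_mem k : (y * u) ^+ k * y ^- k \in M.
Proof.
elim: k => [|k IHk]; first by rewrite !expg0 invg1 mulg1 group1.
have -> : (y * u) ^+ k.+1 * y ^- k.+1 =
          (y * u) ^+ k * y ^- k * u ^ y ^- k.+1.
  by rewrite /conjg invgK expgSr [X in _ * (X * (u * _))]expgSr !mulgA mulgKV.
by rewrite groupM // memJ_norm // groupV groupX.
Qed.

Lemma conjg_twist m k : m \in M -> m ^ ((y * u) ^+ k) = m ^ (y ^+ k).
Proof.
move=> Mm; elim: k => [|k IHk]; first by rewrite !expg0.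
rewrite !expgSr !conjgM IHk; apply/conjg_fixP/commgP/esym.
by apply: (centP cMu); rewrite !memJ_norm ?groupX.
Qed.

Lemma twist_cocycle_eq x i n : y ^- i * x \in M -> y ^- n * x \in M ->
  (y * u) ^+ i * y ^- i = (y * u) ^+ n * y ^- n.
Proof.
move=> Mi Mn; wlog le_in : i n Mi Mn / i <= n => [hyp|].
  by case: (leqP i n) => [|/ltnW] le; [apply: hyp | symmetry; apply: hyp].
have yM : y ^+ (n - i) \in M.
  have := groupM Mn (groupVr Mi).
  by rewrite invMg invgK mulgA mulgK -{1}(subnKC le_in) expgD invMg mulgKV groupV.
have -> : n = (i + (n - i) %/ p * p)%N.
  by rewrite divnK ?subnKC ?expg_maximal_dvdn.
by rewrite !expgD mulnC !expgM yu_p invMg !mulgA mulgK.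
Qed.

(* An exponent i with x in y^i M, for x in G (junk value 0 otherwise). *)
Definition coset_exp x :=
  if [pick i : 'I_#[y] | y ^- i * x \in M] is Some i then val i else 0%N.

Lemma coset_expP x : x \in G -> y ^- coset_exp x * x \in M.
Proof.
rewrite /coset_exp; case: pickP => [//|noi] Gx.
have : x \in <[y]> * M by rewrite (mulg_cycle_maximal maxM nMG Gy My).
case/mulsgP => _ m /cyclePmin [i lti ->] Mm def_x.
by move: (noi (Ordinal lti)); rewrite /= def_x mulKg Mm.
Qed.

Definition twist x := (y * u) ^+ coset_exp x * y ^- coset_exp x * x.

Lemma twistE x n : y ^- n * x \in M -> twist x = (y * u) ^+ n * y ^- n * x.
Proof.
move=> Mn; have Gx : x \in G.
  by rewrite -(mulKVg (y ^+ n) x) groupM ?groupX // (subsetP sMG).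
by rewrite /twist (twist_cocycle_eq (coset_expP Gx) Mn).
Qed.

Lemma twist_id m : m \in M -> twist m = m.
Proof. by move=> Mm; rewrite (@twistE m 0) ?expg0 ?invg1 ?mul1g. Qed.

Lemma twist_gen : twist y = y * u.
Proof. by rewrite (@twistE y 1) ?expg1 ?mulVg ?group1 ?mulgKV. Qed.

Lemma twistM : {in G &, {morph twist : a b / a * b}}.
Proof.
move=> a b Ga Gb /=; set i := coset_exp a; set j := coset_exp b.
have Ma : y ^- i * a \in M := coset_expP Ga.
have Mb : y ^- j * b \in M := coset_expP Gb.
have split_ab : y ^- (i + j) * (a * b) = (y ^- i * a) ^ y ^+ j * (y ^- j * b).
  by rewrite /conjg expgD invMg !mulgA mulgK.
have Mab : y ^- (i + j) * (a * b) \in M.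
  by rewrite split_ab groupM // memJ_norm ?groupX.
rewrite (twistE Mab) /twist -/i -/j -(mulgA _ _ a) -(mulgA _ _ b) -mulgA.
by rewrite split_ab -(conjg_twist j Ma) expgD /conjg !mulgA mulgK.
Qed.

Definition twist_morphism := Morphism twistM.

Lemma twist_injm : 'injm twist_morphism.
Proof.
apply/subsetP => x kx; have /= tx1 := mker kx.
have Mx : x \in M.
  have := twist_cocycle_mem (coset_exp x).
  by rewrite -(mulgK x (_ * _)) -/(twist x) tx1 mul1g groupV.
by rewrite inE -(twist_id Mx) tx1.
Qed.

Lemma twist_im : twist_morphism @* G = G.
Proof.
apply/eqP; rewrite eqEcard card_injm ?twist_injm // leqnn andbT morphimEdom.
apply/subsetP => _ /imsetP [x Gx ->] /=.
by rewrite groupM // (subsetP sMG) // twist_cocycle_mem.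
Qed.

Definition twist_aut := aut twist_injm twist_im.

Lemma Aut_twist : twist_aut \in Aut G.
Proof. exact: Aut_aut. Qed.

Lemma twist_aut_id m : m \in M -> twist_aut m = m.
Proof. by move=> Mm; rewrite autE ?(subsetP sMG) //= twist_id. Qed.

Lemma twist_autX k : (twist_aut ^+ k) y = y * u ^+ k.
Proof.
rewrite permX; elim: k => [|k IHk]; first by rewrite expg0 mulg1.
rewrite iterS IHk -(autmE Aut_twist) morphM ?groupX //=.
by rewrite !autmE autE //= twist_gen twist_aut_id ?groupX // expgS mulgA.
Qed.

Lemma order_twist_aut : u ^+ p = 1 -> u != 1 -> #[twist_aut] = p.
Proof.
move=> up1 u1; have Ap : twist_aut ^+ p \in Aut G by rewrite groupX ?Aut_twist.
have ap1 : twist_aut ^+ p = 1.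
  apply: (eq_Aut Ap (group1 _)) => x; rewrite perm1.
  rewrite -(mulg_cycle_maximal maxM nMG Gy My) => /mulsgP [_ m /cycleP [k ->] Mm ->].
  have Gm : m \in G := subsetP sMG m Mm.
  rewrite -(autmE Ap) morphM ?morphX ?groupX //= autmE.
  by rewrite twist_autX up1 mulg1 permX_fix ?twist_aut_id.
have a1 : #[twist_aut] != 1%N.
  rewrite order_eq1; apply: contra u1 => /eqP a1.
  by have := twist_autX 1; rewrite a1 perm1 expg1 -{1}(mulg1 y) => /mulgI <-.
by apply/(prime_nt_dvdP pr_p a1); rewrite order_dvdn ap1.
Qed.

Lemma twist_aut_inner : u != 1 -> inner_aut G twist_aut ->
  exists2 g, g \in 'Z(M) & [~ y, g] = u.
Proof.
move=> u1 [g Gg ag]; have cMg : g \in 'C(M).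
  apply/centP => m Mm; apply/esym/commgP/conjg_fixP.
  by rewrite -ag ?(subsetP sMG) ?twist_aut_id.
have yg : [~ y, g] = u.
  by rewrite commgEl -ag // autE //= twist_gen mulKg.
exists g => //; rewrite inE cMg andbT; apply: contraR u1 => Mg.
have /centP cGg := cent_maximal maxM nMG Gg Mg cMg (commute_refl g).
by rewrite -yg; apply/commgP/esym/cGg.
Qed.

Lemma twist_aut_noninner : u ^+ p = 1 -> u != 1 ->
    ~ (exists2 g, g \in 'Z(M) & [~ y, g] = u) ->
  exists2 a : {perm gT}, a \in Aut G & (#[a] = p /\ ~ inner_aut G a).
Proof.
move=> up1 u1 noZg; exists twist_aut; first exact: Aut_twist.
by split; [apply: order_twist_aut | move/(twist_aut_inner u1)].
Qed.

End Twist.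

Lemma commg_mem_lcn3 (gT : finGroupType) (G : {group gT}) x y t :
  x \in G -> y \in G -> t \in G -> [~ x, [~ y, t]] \in 'L_3(G).
Proof.
move=> Gx Gy Gt; rewrite -(invgR _ x) groupV /= (lcnSn 1) (lcnSn 0) lcn1.
by rewrite !mem_commg.
Qed.

Section CentralCommutator.

Variables (gT : finGroupType) (G M : {group gT}) (p : nat) (y z w : gT).
Hypotheses (maxM : maximal M G) (nMG : G \subset 'N(M)).
Hypotheses (Gy : y \in G) (My : y \notin M).
Hypotheses (ZGz : z \in 'Z(G)) (oz : #[z] = p).
Hypotheses (ZMw : w \in 'Z(M)) (yw : [~ y, w] = z).

Let sMG : M \subset G. Proof. by case/andP: (maxgroupp maxM). Qed.
Let Gw : w \in G. Proof. by case/setIP: ZMw => /(subsetP sMG). Qed.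
Let cGz : z \in 'C(G). Proof. by case/setIP: ZGz. Qed.
Let wy : [~ w, y] = z^-1. Proof. by rewrite -invgR yw. Qed.
Let cwz : commute w z^-1. Proof. exact/commuteV/commute_sym/(centP cGz). Qed.

Lemma expg_center_commutator : w ^+ p \in 'Z(G).
Proof.
have cwpy : commute (w ^+ p) y.
  apply/commgP/conjg_fixP.
  by rewrite conjXg conjg_mulR wy expgMn // expVgn -oz expg_order invg1 mulg1.
rewrite inE groupX //= (cent_maximal maxM nMG Gy My) ?groupX //.
by case/setIP: ZMw.
Qed.

Lemma expg_commutator_eq1 : cyclic 'Z(G) -> p.-group G ->
  (forall v, v \in G -> v ^+ p != z) -> w ^+ p = 1.
Proof.
move=> cZ pG zNpow; apply/eqP/negPn/negP => wp1.
have pZ : p.-group 'Z(G) by apply: pgroupS pG; apply: center_sub.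
have /cycleP [j zE] :=
  cyclic_pgroup_prime_order_mem cZ pZ ZGz oz expg_center_commutator wp1.
by have := zNpow _ (groupX j Gw); rewrite zE -!expgM mulnC eqxx.
Qed.

Lemma expMg_commutator : prime p -> odd p -> w ^+ p = 1 -> (y * w) ^+ p = y ^+ p.
Proof.
move=> pr_p odd_p wp1; rewrite expMg_odd_prime // ?wp1 ?mulg1 // wy //.
- exact/commuteV/commute_sym/(centP cGz).
- by rewrite expVgn -oz expg_order invg1.
Qed.

End CentralCommutator.

Theorem lemma4p1 (gT : finGroupType) (G : {group gT}) (p : nat) :
  prime p -> odd p -> p.-group G -> ~~ abelian G -> cyclic 'Z(G) ->
  ~~ (Omega1 p 'Z(G) \subset 'L_3(G) <*> powgrp p G) ->
  exists2 a : {perm gT}, a \in Aut G & (#[a] = p /\ ~ inner_aut G a).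
Proof.
move=> pr_p odd_p pG nabG cZ.
rewrite /Omega1 gen_subG => /subsetPn [z /setIdP [ZGz /eqP zp] zNH].
have [Gz cGz] := setIP ZGz.
have z1 : z != 1 by apply: contraNneq zNH => ->; apply: group1.
have oz : #[z] = p by apply/prime_nt_dvdP; rewrite ?order_eq1 ?order_dvdn ?zp.
have zNpow v : v \in G -> v ^+ p != z.
  move=> Gv; apply: contraNneq zNH => <-.
  by rewrite (subsetP (joing_subr _ _)) // mem_gen //; apply: imset_f.
have prZ : <[z]> \proper G.
  rewrite properEneq cycle_subG Gz andbT; apply: contraNneq nabG => <-.
  exact: cycle_abelian.
have [M maxM szM] := @maxgroup_exists _ (fun H : {group gT} => H \proper G) _ prZ.
have nMG := normal_norm (p_maximal_normal pG maxM).
have iGM := p_maximal_index pG maxM.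
have [sMG [y Gy My]] := properP (maxgroupp maxM).
have ZMz : z \in 'Z(M).
  by rewrite inE (subsetP szM) ?cycle_id //= (subsetP (centS sMG)).
case: (boolP [exists (w | w \in 'Z(M)), [~ y, w] == z]).
  case/exists_inP => w ZMw /eqP yw.
  have wp1 := expg_commutator_eq1 maxM nMG Gy My ZGz oz ZMw yw cZ pG zNpow.
  apply: (twist_aut_noninner pr_p maxM nMG iGM Gy My ZMw _ wp1).
  - exact: (expMg_commutator maxM Gy ZGz oz ZMw yw pr_p odd_p wp1).
  - by apply: contraNneq z1 => w1; rewrite -yw w1 commg1.
  case=> g ZMg yg; case/negP: zNH; rewrite -yw -yg (subsetP (joing_subl _ _)) //.
  by rewrite commg_mem_lcn3 // (subsetP sMG) //; case/setIP: ZMg.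
move=> noW; apply: (twist_aut_noninner pr_p maxM nMG iGM Gy My ZMz _ zp z1).
  by rewrite expgMn ?zp ?mulg1 //; apply/commute_sym/(centP cGz).
by case=> g ZMg /eqP yg; case/exists_inP: noW; exists g.
Qed.
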